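(* Let $p$ be a prime, let $n\geqslant 2$ be an integer, let $m\geqslant 0$ be an integer and let $k\geqslant 2$ be an integer not divisible by $p$. For positive integers $a,r$ let $w(a,r)=\frac{1}{r}\sum_{d\mid r}\mu(d)\,a^{r/d}$, where $\mu$ is the Möbius function. For $i=0,1,\dots,m$ define $$a_i = \frac{w(n,p^{m-i}k)^{p^i}}{p^i\, w(n,p^mk)}.$$ Suppose that $0 < s \leqslant i \leqslant m$. Then $$\frac{a_i}{a_{i-s}} \leqslant p^{-s}\left(\frac{2p^s}{(p^{m-i}k)^{p^s-1}}\right)^{p^{i-s}}.$$ *)

From mathcomp Require Import all_boot all_order all_algebra.
Set Implicit Arguments. Unset Strict Implicit. Unset Printing Implicit Defensive.
Import Order.TTheory GRing.Theory Num.Theory.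
Local Open Scope ring_scope.

Definition moebius (d : nat) : int :=
  if d == 0%N then 0
  else if all (fun q => logn q d == 1%N) (primes d)
       then (-1) ^+ size (primes d) else 0.

Definition necklace_w (R : realFieldType) (a r : nat) : R :=
  (r%:R)^-1 * \sum_(d <- divisors r) (moebius d)%:~R * ((a ^ (r %/ d))%:R).

Definition coef_a (R : realFieldType) (p n m k i : nat) : R :=
  (necklace_w R n (p ^ (m - i) * k)) ^+ (p ^ i)
  / ((p ^ i)%:R * necklace_w R n (p ^ m * k)).

(* Let P(N) = N w(n, N) = sum_{d | N} mu(d) n^(N/d).  Besides the term n^N for d = 1,
   the terms have pairwise distinct exponents N/d <= N/2, so they add up in absolute
   value to at most sum_{j <= N/2} n^j, which gives n^N <= 2 P(N) for N >= 4.  For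
   N >= 2 the term of the least prime factor q of N is -n^(N/q), which outweighs all
   terms with d > q, so P(N) <= n^N.  With r = p^(m-i) k one has
   a_i / a_(i-s) = p^-s (w(r)^(p^s) / w(p^s r))^(p^(i-s)), and the two bounds give
   w(r)^(p^s) / w(p^s r) <= 2 p^s / r^(p^s - 1). *)

From mathcomp Require Import all_boot all_order all_algebra.
From mathcomp Require Import zify ring lra.
Import Order.TTheory GRing.Theory Num.Theory.

Lemma sum_expn_lt n t : 1 < n -> \sum_(j < t) n ^ j < n ^ t.
Proof.
move=> n_gt1; elim: t => [|t IHt]; first by rewrite big_ord0.
rewrite big_ord_recr /= expnS.
apply: leq_trans (_ : n ^ t + n ^ t <= n * n ^ t).
  by rewrite ltn_add2r.
by rewrite addnn -mul2n leq_mul2r n_gt1 orbT.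
Qed.

Lemma leq_sum_inj_ord (I : eqType) (s : seq I) (P : pred I) (g : I -> nat)
    (F : nat -> nat) (B : nat) :
  uniq s -> {in s &, injective g} -> (forall x, x \in s -> P x -> g x < B) ->
  \sum_(x <- s | P x) F (g x) <= \sum_(j < B) F j.
Proof.
move=> s_uniq g_inj g_lt.
rewrite -big_filter -(big_map g xpredT) -(big_mkord xpredT).
apply: (@uniq_sub_le_big _ _ _ leqnn (fun x y => leq_addr y x) 0 nat).
- rewrite map_inj_in_uniq ?filter_uniq // => x y.
  by rewrite !mem_filter => /andP[_ xs] /andP[_ ys]; apply: g_inj.
- exact: iota_uniq.
- move=> j /mapP[x]; rewrite mem_filter => /andP[Px xs] ->.
  by rewrite mem_iota add0n subn0 g_lt.
Qed.

Lemma divn_cofactor {N d} : 0 < N -> d %| N -> N %/ (N %/ d) = d.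
Proof. by move=> N_gt0 dN; rewrite divnA // mulKn. Qed.

Lemma sum_divisors_le (N B : nat) (P : pred nat) (F : nat -> nat) :
  0 < N -> (forall d, d %| N -> P d -> N %/ d < B) ->
  \sum_(d <- divisors N | P d) F (N %/ d) <= \sum_(j < B) F j.
Proof.
move=> N_gt0 lt_B; apply: leq_sum_inj_ord; first exact: divisors_uniq.
  move=> d1 d2; rewrite -!dvdn_divisors // => d1N d2N eq_d.
  by rewrite -(divn_cofactor N_gt0 d1N) eq_d divn_cofactor.
by move=> d; rewrite -dvdn_divisors //; apply: lt_B.
Qed.

Lemma moebius1 : moebius 1 = 1%R.
Proof. by []. Qed.

Lemma moebius_prime q : prime q -> moebius q = (-1)%R.
Proof.
move=> q_pr; rewrite /moebius primes_prime //= logn_prime // eqxx /=.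
by case: q q_pr => // q _; rewrite expr1.
Qed.

Local Open Scope ring_scope.

Lemma norm_moebius_le1 (R : numDomainType) d : `|(moebius d)%:~R : R| <= 1.
Proof.
rewrite /moebius; case: ifP => _; first by rewrite normr0.
case: ifP => _; last by rewrite normr0.
by rewrite rmorphXn rmorphN1 normrX normrN1 expr1n.
Qed.

Lemma ler_norm_moebius_sum (R : numDomainType) (s : seq nat) (P : pred nat)
    (x : nat -> nat) :
  `|\sum_(d <- s | P d) (moebius d)%:~R * (x d)%:R : R|
    <= (\sum_(d <- s | P d) x d)%N%:R.
Proof.
rewrite natr_sum; apply: le_trans (ler_norm_sum _ _ _) _; apply: ler_sum => d _.
by rewrite normrM normr_nat ler_piMl ?norm_moebius_le1.
Qed.

Section NecklaceBounds.

Variables (R : realFieldType) (n : nat).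
Hypothesis n_gt1 : (1 < n)%N.

Definition primitive_words (N : nat) : R :=
  \sum_(d <- divisors N) (moebius d)%:~R * (n ^ (N %/ d))%:R.

Lemma necklace_wE N : necklace_w R n N = N%:R^-1 * primitive_words N.
Proof. by []. Qed.

Lemma primitive_wordsE N : (0 < N)%N ->
  primitive_words N
    = (n ^ N)%:R
      + \sum_(d <- divisors N | d != 1%N) (moebius d)%:~R * (n ^ (N %/ d))%:R.
Proof.
move=> N_gt0; rewrite /primitive_words (bigD1_seq 1%N) ?divisors_uniq ?divisor1 //.
by rewrite moebius1 divn1 mul1r.
Qed.

Lemma primitive_words_ge N : (0 < N)%N ->
  (n ^ N)%:R - (\sum_(j < N./2.+1) n ^ j)%N%:R <= primitive_words N.
Proof.
move=> N_gt0; rewrite primitive_wordsE // lerD2l.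
have := ler_norm_moebius_sum R (divisors N) (predC1 1%N) (fun d => n ^ (N %/ d))%N.
rewrite ler_norml => /andP[+ _]; apply: le_trans; rewrite lerN2 ler_nat.
apply: sum_divisors_le => // d dN d_neq1.
rewrite ltnS -divn2 leq_div2l //.
by case: d dN d_neq1 => [|[|d]] //; rewrite dvd0n => /eqP N0; rewrite N0 in N_gt0.
Qed.

Lemma primitive_words_le N : (1 < N)%N -> primitive_words N <= (n ^ N)%:R.
Proof.
move=> N_gt1; have N_gt0 : (0 < N)%N by apply: ltnW.
set q := pdiv N; have q_pr : prime q := pdiv_prime N_gt1.
have qN : (q %| N)%N := pdiv_dvd N.
rewrite primitive_wordsE // -[leRHS]addr0 lerD2l -big_filter.
rewrite (bigD1_seq q) ?filter_uniq ?divisors_uniq //=; last first.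
  by rewrite mem_filter -dvdn_divisors // qN andbT; apply: contraTneq q_pr => ->.
rewrite big_filter_cond moebius_prime // rmorphN1 mulN1r addrC subr_le0.
have := ler_norm_moebius_sum R (divisors N)
  (fun d => (d != 1) && (d != q))%N (fun d => n ^ (N %/ d))%N.
rewrite ler_norml => /andP[_] /le_trans; apply; rewrite ler_nat.
apply: (leq_trans _ (ltnW (sum_expn_lt n (N %/ q) n_gt1))).
apply: sum_divisors_le => // d dN /andP[d_neq1 d_neqq].
have d_gt0 : (0 < d)%N by apply: dvdn_gt0 dN.
have q_lt_d : (q < d)%N.
  by rewrite ltn_neqAle eq_sym d_neqq pdiv_min_dvd // ltn_neqAle eq_sym d_neq1.
by rewrite ltn_divRL // -{2}(divnK dN) ltn_pmul2l // divn_gt0 // dvdn_leq.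
Qed.

Lemma primitive_words_gt0 N : (1 < N)%N -> 0 < primitive_words N.
Proof.
move=> N_gt1; apply: (lt_le_trans _ (primitive_words_ge _ (ltnW N_gt1))).
rewrite subr_gt0 ltr_nat (leq_trans (sum_expn_lt _ _ n_gt1)) //.
by rewrite leq_pexp2l ?(ltnW n_gt1) // -divn2 ltn_Pdiv // ltnW.
Qed.

Lemma primitive_words_ge_half N : (3 < N)%N -> (n ^ N)%:R <= 2 * primitive_words N.
Proof.
move=> N_gt3; have N_gt0 : (0 < N)%N by apply: leq_trans N_gt3.
have tail_le : (2 * \sum_(j < N./2.+1) n ^ j <= n ^ N)%N.
  apply: leq_trans (leq_mul n_gt1 (ltnW (sum_expn_lt n _ n_gt1))) _.
  by rewrite -expnS leq_pexp2l ?(ltnW n_gt1) // -divn2; lia.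
have := primitive_words_ge _ N_gt0; move: tail_le; rewrite -(ler_nat R) natrM.
lra.
Qed.

Lemma necklace_w_gt0 N : (1 < N)%N -> 0 < necklace_w R n N.
Proof.
by move=> N_gt1; rewrite necklace_wE mulr_gt0 ?primitive_words_gt0 // invr_gt0 ltr0n ltnW.
Qed.

Lemma necklace_w_le N : (1 < N)%N -> necklace_w R n N <= (n ^ N)%:R / N%:R.
Proof.
move=> N_gt1; rewrite necklace_wE mulrC ler_pM2r ?primitive_words_le //.
by rewrite invr_gt0 ltr0n ltnW.
Qed.

Lemma necklace_w_ge N : (3 < N)%N -> (n ^ N)%:R / (2 * N%:R) <= necklace_w R n N.
Proof.
move=> N_gt3; have N_pos : 0 < N%:R :> R by rewrite ltr0n (leq_trans _ N_gt3).
rewrite necklace_wE ler_pdivrMr ?mulr_gt0 //.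
have -> : N%:R^-1 * primitive_words N * (2 * N%:R) = 2 * primitive_words N.
  by field; rewrite lt0r_neq0.
exact: primitive_words_ge_half.
Qed.

Lemma necklace_w_power_ratio q r : (1 < q)%N -> (1 < r)%N ->
  necklace_w R n r ^+ q / necklace_w R n (q * r)
    <= 2 * q%:R / r%:R ^+ (q - 1).
Proof.
move=> q_gt1 r_gt1; have qr_gt3 : (3 < q * r)%N by rewrite (leq_mul q_gt1 r_gt1).
have r_pos : 0 < r%:R :> R by rewrite ltr0n ltnW.
have q_pos : 0 < q%:R :> R by rewrite ltr0n ltnW.
rewrite ler_pdivrMr ?necklace_w_gt0 ?(leq_trans _ qr_gt3) //.
apply: (le_trans (y := ((n ^ r)%:R / r%:R) ^+ q)).
  by rewrite lerXn2r ?nnegrE ?necklace_w_le ?ltW ?necklace_w_gt0 //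
    divr_gt0 // ltr0n expn_gt0 ltnW.
apply: (le_trans (y := 2 * q%:R / r%:R ^+ (q - 1)
                         * ((n ^ (q * r))%:R / (2 * (q * r)%:R)))); last first.
  by rewrite ler_pM2l ?necklace_w_ge // divr_gt0 ?exprn_gt0 // mulr_gt0.
have r_exp : r%:R ^+ q = r%:R ^+ (q - 1) * r%:R :> R.
  by rewrite -exprSr subn1 prednK // ltnW.
rewrite mulnC expnM !natrX natrM expr_div_n r_exp le_eqVlt; apply/predU1l.
by field; rewrite !lt0r_neq0 ?exprn_gt0.
Qed.

Lemma coef_a_ratio p m k s i : (0 < p)%N -> (1 < k)%N -> (s <= i <= m)%N ->
  coef_a R p n m k i / coef_a R p n m k (i - s)
    = p%:R ^- s * (necklace_w R n (p ^ (m - i) * k) ^+ (p ^ s)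
                   / necklace_w R n (p ^ s * (p ^ (m - i) * k))) ^+ (p ^ (i - s)).
Proof.
move=> p_gt0 k_gt1 /andP[le_si le_im].
have pX_gt0 j : (0 < p ^ j)%N by rewrite expn_gt0 p_gt0.
have pXk_gt1 j : (1 < p ^ j * k)%N by rewrite (leq_trans k_gt1) // leq_pmull.
rewrite /coef_a.
have -> : (p ^ (m - (i - s)) * k = p ^ s * (p ^ (m - i) * k))%N.
  by rewrite mulnA -expnD; congr (p ^ _ * k)%N; lia.
have -> : (p ^ i = p ^ s * p ^ (i - s))%N by rewrite -expnD subnKC.
have w_neq0 := lt0r_neq0 (necklace_w_gt0 _ (pXk_gt1 _)).
have w'_neq0 : necklace_w R n (p ^ s * (p ^ (m - i) * k)) != 0.
  by rewrite mulnA -expnD lt0r_neq0 ?necklace_w_gt0.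
rewrite exprM natrM natrX expr_div_n.
field; rewrite ?expf_neq0 ?w_neq0 ?w'_neq0 ?pnatr_eq0 -?lt0n ?pX_gt0 //.
Qed.

End NecklaceBounds.

Theorem lemma2p3 (R : realFieldType) (p n m k s i : nat) :
  prime p -> (2 <= n)%N -> (2 <= k)%N -> ~~ (p %| k)%N ->
  (0 < s)%N -> (s <= i)%N -> (i <= m)%N ->
  coef_a R p n m k i / coef_a R p n m k (i - s)
  <= (p%:R ^- s) *
     ((2 * (p ^ s)%:R) / ((p ^ (m - i) * k)%:R ^+ (p ^ s - 1))) ^+ (p ^ (i - s)).
Proof.
move=> p_pr n_gt1 k_gt1 _ s_gt0 le_si le_im.
have p_gt1 := prime_gt1 p_pr; have p_gt0 := ltnW p_gt1.
have pXs_gt1 : (1 < p ^ s)%N by rewrite -(expn0 p) ltn_exp2l.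
have r_gt1 : (1 < p ^ (m - i) * k)%N.
  by rewrite (leq_trans k_gt1) // leq_pmull ?expn_gt0 ?p_gt0.
rewrite coef_a_ratio ?le_si //; apply: ler_wpM2l; first by rewrite invr_ge0 exprn_ge0.
rewrite lerXn2r ?nnegrE ?necklace_w_power_ratio //.
- rewrite divr_ge0 ?exprn_ge0 ?ltW ?necklace_w_gt0 //.
  by rewrite (leq_trans r_gt1) // leq_pmull // ltnW.
- by rewrite divr_ge0 ?exprn_ge0 ?mulr_ge0.
Qed.
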